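(* Let $n\ge 1$, $\theta^*\in\mathbb{R}^n$, and let $\phi:\mathbb{R}_{\ge0}\to\mathbb{R}^n$ be piecewise continuous and persistently exciting: there exist $M>0$, $T>0$, $\delta>0$ with $|\phi(t)|\le M$ for all $t\ge0$ and $\int_t^{t+T}\phi(s)\phi^T(s)\,ds\ge \delta I_n$ for all $t\ge 0$. Let $\beta,\gamma,\mu>0$ with $\beta\ge 2\gamma/\mu$, and set $\mathcal{N}_t:=1+\mu\,\phi^T(t)\phi(t)$. Consider the system in $x=(\theta,\vartheta)\in\mathbb{R}^n\times\mathbb{R}^n$ $$\dot\theta=-\beta(\theta-\vartheta)\mathcal{N}_t,\qquad \dot\vartheta=-\gamma\,\phi(t)\phi^T(t)(\theta-\theta^* ).$$ Then the point $(\theta^*,\theta^* )$ is uniformly globally asymptotically stable for this system. *)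

(* A vector of R^n is represented as a function v : nat -> R of which only the
   coordinates 0 .. n-1 are relevant (all definitions below only look at i < n). *)
From Stdlib Require Import Reals Lra Lia.
From Coquelicot Require Import Coquelicot.
Open Scope R_scope.

Fixpoint vsum (n : nat) (f : nat -> R) : R :=
  match n with
  | O => 0
  | S k => vsum k f + f k
  end.

Definition dot (n : nat) (u v : nat -> R) : R := vsum n (fun i => u i * v i).
Definition vnorm (n : nat) (v : nat -> R) : R := sqrt (dot n v v).
Definition vsub (u v : nat -> R) : nat -> R := fun i => u i - v i.

Definition piecewise_continuous (n : nat) (phi : R -> nat -> R) : Prop :=
  forall a b : R, 0 <= a -> a < b ->
  exists (k : nat) (p : nat -> R),
    p O = a /\ p k = b /\ (forall j, (j < k)%nat -> p j < p (S j)) /\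
    forall j, (j < k)%nat ->
      exists g : R -> nat -> R,
        forall i, (i < n)%nat ->
          (forall s, p j <= s <= p (S j) -> continuous (fun r => g r i) s) /\
          (forall s, p j < s < p (S j) -> phi s i = g s i).

Definition gram (phi : R -> nat -> R) (t T : R) (i j : nat) : R :=
  RInt (fun s => phi s i * phi s j) t (t + T).

Definition persistently_exciting (n : nat) (phi : R -> nat -> R) : Prop :=
  exists M T delta : R, 0 < M /\ 0 < T /\ 0 < delta /\
    (forall t, 0 <= t -> vnorm n (phi t) <= M) /\
    (forall t, 0 <= t -> forall v : nat -> R,
        vsum n (fun i => vsum n (fun j => v i * gram phi t T i j * v j))
        >= delta * dot n v v).

Definition Nt (n : nat) (mu : R) (phi : R -> nat -> R) (t : R) : R :=
  1 + mu * dot n (phi t) (phi t).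

(* (th, vt) is a (Caratheodory) solution on [t0, oo) of
     th' = -beta (th - vt) N_t,   vt' = -gamma phi phi^T (th - thstar),
   written in integral form (with Riemann-integrable right-hand sides). *)
Definition is_solution (n : nat) (beta gamma mu : R) (phi : R -> nat -> R)
  (thstar : nat -> R) (t0 : R) (x : R -> (nat -> R) * (nat -> R)) : Prop :=
  let th := fun s => fst (x s) in
  let vt := fun s => snd (x s) in
  forall t, t0 <= t -> forall i, (i < n)%nat ->
    let f1 := fun s => - beta * (th s i - vt s i) * Nt n mu phi s in
    let f2 := fun s => - gamma * phi s i * dot n (phi s) (vsub (th s) thstar) in
    ex_RInt f1 t0 t /\ ex_RInt f2 t0 t /\
    th t i = th t0 i + RInt f1 t0 t /\
    vt t i = vt t0 i + RInt f2 t0 t.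

(* Uniform global asymptotic stability (classical definition, e.g. Khalil):
   uniform stability + uniform global boundedness + uniform global attractivity,
   for a system given by its solution predicate [sol t0 x] (x a solution on
   [t0,oo), t0 >= 0) and the distance [err] of a state to the equilibrium. *)
Definition UGAS {X : Type} (sol : R -> (R -> X) -> Prop) (err : X -> R) : Prop :=
  (forall eps, 0 < eps -> exists d, 0 < d /\
     forall t0 x, 0 <= t0 -> sol t0 x -> err (x t0) < d ->
       forall t, t0 <= t -> err (x t) < eps) /\
  (forall r, 0 < r -> exists c, 0 < c /\
     forall t0 x, 0 <= t0 -> sol t0 x -> err (x t0) < r ->
       forall t, t0 <= t -> err (x t) < c) /\
  (forall r eps, 0 < r -> 0 < eps -> exists T, 0 < T /\
     forall t0 x, 0 <= t0 -> sol t0 x -> err (x t0) < r ->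
       forall t, t0 + T <= t -> err (x t) < eps).

Definition err_eq (n : nat) (thstar : nat -> R) (x : (nat -> R) * (nat -> R)) : R :=
  sqrt (dot n (vsub (fst x) thstar) (vsub (fst x) thstar)
        + dot n (vsub (snd x) thstar) (vsub (snd x) thstar)).

(* With [w = vartheta - thstar] and [z = theta - vartheta], the function
   [V = |w|^2 + |z|^2] satisfies [V' <= -2 (beta |z|^2 + gamma (phi^T w)^2)] along solutions:
   the cross terms cancel, and [beta >= 2 gamma / mu] lets the normalisation [N_t] absorb the
   remaining term [gamma (phi^T z)^2].  Over a window [[t, t + T]] the increments of [w] and [z]
   are controlled by the integral of this dissipation (Cauchy-Schwarz in time), so persistent
   excitation bounds [V(t)] by that integral; hence [V(t + T) <= rho V(t)] with [rho < 1]
   independent of [t] and of the solution.  As [V] is within a factor [3] of the squared distance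
   to [(thstar, thstar)], this exponential decay gives uniform global asymptotic stability.
   Since [phi] is only piecewise continuous, the Lyapunov inequality is proved piece by piece. *)

From Stdlib Require Import Reals Lra Lia Psatz FunctionalExtensionality.
From Coquelicot Require Import Coquelicot.
Open Scope R_scope.

Lemma vsum_ext m f g : (forall i, (i < m)%nat -> f i = g i) -> vsum m f = vsum m g.
Proof. induction m as [|m IH]; simpl; intros H; auto. rewrite IH, H; auto. Qed.

Lemma vsum_le m f g : (forall i, (i < m)%nat -> f i <= g i) -> vsum m f <= vsum m g.
Proof.
  induction m as [|m IH]; simpl; intros H; [lra|].
  assert (vsum m f <= vsum m g) by (apply IH; auto). assert (f m <= g m) by auto. lra.
Qed.

Lemma vsum_nonneg m f : (forall i, (i < m)%nat -> 0 <= f i) -> 0 <= vsum m f.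
Proof.
  induction m as [|m IH]; simpl; intros H; [lra|].
  assert (0 <= vsum m f) by (apply IH; auto). assert (0 <= f m) by auto. lra.
Qed.

Lemma vsum_plus m f g : vsum m (fun i => f i + g i) = vsum m f + vsum m g.
Proof. induction m as [|m IH]; simpl; [lra|]. rewrite IH; lra. Qed.

Lemma vsum_minus m f g : vsum m (fun i => f i - g i) = vsum m f - vsum m g.
Proof. induction m as [|m IH]; simpl; [lra|]. rewrite IH; lra. Qed.

Lemma vsum_scal m c f : vsum m (fun i => c * f i) = c * vsum m f.
Proof. induction m as [|m IH]; simpl; [lra|]. rewrite IH; lra. Qed.

Lemma vsum_mult m f g : vsum m f * vsum m g = vsum m (fun i => vsum m (fun j => f i * g j)).
Proof.
  rewrite Rmult_comm, <- vsum_scal. apply vsum_ext; intros i _.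
  rewrite Rmult_comm, <- vsum_scal. apply vsum_ext; intros; ring.
Qed.

Lemma dot_nonneg m u : 0 <= dot m u u.
Proof. apply vsum_nonneg; intros; apply Rle_0_sqr. Qed.

Lemma dot_le_of_vnorm_le m v M : vnorm m v <= M -> dot m v v <= M * M.
Proof.
  unfold vnorm. intros H. assert (Hs := sqrt_pos (dot m v v)).
  rewrite <- (sqrt_sqrt (dot m v v)) by apply dot_nonneg. nra.
Qed.

Lemma dot_plus_r m u v w : dot m u (fun i => v i + w i) = dot m u v + dot m u w.
Proof. unfold dot. rewrite <- vsum_plus. apply vsum_ext; intros; ring. Qed.

Lemma dot_minus_r m u v w : dot m u (fun i => v i - w i) = dot m u v - dot m u w.
Proof. unfold dot. rewrite <- vsum_minus. apply vsum_ext; intros; ring. Qed.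

Lemma Cauchy_Schwarz_step A B C x y : 0 <= B -> 0 <= C -> A * A <= B * C ->
  (A + x * y) * (A + x * y) <= (B + x * x) * (C + y * y).
Proof.
  intros HB HC HA.
  set (u := B * (y * y) + C * (x * x)).
  assert (Hu : 0 <= u) by (unfold u; nra).
  (* [2 A x y <= B y^2 + C x^2], compared through squares *)
  assert (Hsq : (2 * A * x * y) * (2 * A * x * y) <= u * u).
  { assert (0 <= (B * C - A * A) * ((x * y) * (x * y))) by (apply Rmult_le_pos; nra).
    assert (0 <= (B * (y * y) - C * (x * x)) * (B * (y * y) - C * (x * x))) by apply Rle_0_sqr.
    replace (u * u) with ((B * (y * y) - C * (x * x)) * (B * (y * y) - C * (x * x))
                          + 4 * (B * C) * ((x * y) * (x * y))) by (unfold u; ring).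
    nra. }
  assert (2 * A * x * y <= u) by nra.
  unfold u in *; nra.
Qed.

Lemma dot_Cauchy_Schwarz m u v : dot m u v * dot m u v <= dot m u u * dot m v v.
Proof.
  induction m as [|m IH]; unfold dot in *; simpl; [lra|].
  apply Cauchy_Schwarz_step; [apply (dot_nonneg m u) | apply (dot_nonneg m v) | exact IH].
Qed.

(* Coquelicot states the following for abstract modules ([plus], [scal], [zero]); these
   instances use the operations of [R] so that [rewrite], [apply] and [lra] see through them. *)
Lemma continuous_plus_R (f g : R -> R) x :
  continuous f x -> continuous g x -> continuous (fun s => f s + g s) x.
Proof. exact (continuous_plus f g x). Qed.
Lemma continuous_minus_R (f g : R -> R) x :
  continuous f x -> continuous g x -> continuous (fun s => f s - g s) x.
Proof. exact (continuous_minus f g x). Qed.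
Lemma continuous_mult_R (f g : R -> R) x :
  continuous f x -> continuous g x -> continuous (fun s => f s * g s) x.
Proof. exact (continuous_mult f g x). Qed.

Lemma continuous_vsum (F : R -> nat -> R) x m :
  (forall i, (i < m)%nat -> continuous (fun s => F s i) x) -> continuous (fun s => vsum m (F s)) x.
Proof.
  induction m as [|m IH]; simpl; intros H; [apply continuous_const|].
  apply continuous_plus_R; [apply IH|]; auto.
Qed.

Lemma is_derive_plus_R (f g : R -> R) x a b :
  is_derive f x a -> is_derive g x b -> is_derive (fun s => f s + g s) x (a + b).
Proof. exact (is_derive_plus f g x a b). Qed.
Lemma is_derive_minus_R (f g : R -> R) x a b :
  is_derive f x a -> is_derive g x b -> is_derive (fun s => f s - g s) x (a - b).
Proof. exact (is_derive_minus f g x a b). Qed.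
Lemma is_derive_mult_R (f g : R -> R) x a b :
  is_derive f x a -> is_derive g x b -> is_derive (fun s => f s * g s) x (a * g x + f x * b).
Proof. intros; exact (is_derive_mult f g x a b H H0 Rmult_comm). Qed.

Lemma is_derive_vsum (F dF : nat -> R -> R) x m :
  (forall i, (i < m)%nat -> is_derive (F i) x (dF i x)) ->
  is_derive (fun s => vsum m (fun i => F i s)) x (vsum m (fun i => dF i x)).
Proof.
  induction m as [|m IH]; simpl; intros H; [exact (is_derive_const _ _)|].
  apply is_derive_plus_R; [apply IH|]; auto.
Qed.

Lemma is_derive_dot_self m (u : R -> nat -> R) (du : nat -> R) s :
  (forall i, (i < m)%nat -> is_derive (fun r => u r i) s (du i)) ->
  is_derive (fun r => dot m (u r) (u r)) s (vsum m (fun i => du i * u s i + u s i * du i)).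
Proof.
  intros H.
  apply (is_derive_vsum (fun i r => u r i * u r i) (fun i _ => du i * u s i + u s i * du i)).
  intros i Hi. apply is_derive_mult_R; auto.
Qed.

Lemma ex_RInt_plus_R (f g : R -> R) a b :
  ex_RInt f a b -> ex_RInt g a b -> ex_RInt (fun s => f s + g s) a b.
Proof. exact (ex_RInt_plus f g a b). Qed.
Lemma ex_RInt_scal_R (f : R -> R) c a b : ex_RInt f a b -> ex_RInt (fun s => c * f s) a b.
Proof. exact (ex_RInt_scal f a b c). Qed.
Lemma RInt_plus_R (f g : R -> R) a b : ex_RInt f a b -> ex_RInt g a b ->
  RInt (fun s => f s + g s) a b = RInt f a b + RInt g a b.
Proof. exact (RInt_plus f g a b). Qed.
Lemma RInt_minus_R (f g : R -> R) a b : ex_RInt f a b -> ex_RInt g a b ->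
  RInt (fun s => f s - g s) a b = RInt f a b - RInt g a b.
Proof. exact (RInt_minus f g a b). Qed.
Lemma RInt_scal_R (f : R -> R) c a b :
  ex_RInt f a b -> RInt (fun s => c * f s) a b = c * RInt f a b.
Proof. exact (RInt_scal f a b c). Qed.
Lemma RInt_const_R c a b : RInt (fun _ => c) a b = (b - a) * c.
Proof. exact (RInt_const a b c). Qed.
Lemma RInt_point_R (f : R -> R) a : RInt f a a = 0.
Proof. exact (RInt_point a f). Qed.
Lemma RInt_Chasles_R (f : R -> R) a b c : ex_RInt f a b -> ex_RInt f b c ->
  RInt f a b + RInt f b c = RInt f a c.
Proof. exact (RInt_Chasles f a b c). Qed.

Lemma ex_RInt_vsum (F : nat -> R -> R) m a b : (forall i, (i < m)%nat -> ex_RInt (F i) a b) ->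
  ex_RInt (fun s => vsum m (fun i => F i s)) a b.
Proof.
  induction m as [|m IH]; simpl; intros H; [apply ex_RInt_const|].
  apply ex_RInt_plus_R; [apply IH|]; auto.
Qed.

Lemma RInt_vsum (F : nat -> R -> R) m a b : (forall i, (i < m)%nat -> ex_RInt (F i) a b) ->
  RInt (fun s => vsum m (fun i => F i s)) a b = vsum m (fun i => RInt (F i) a b).
Proof.
  induction m as [|m IH]; simpl; intros H; [rewrite RInt_const_R; ring|].
  rewrite RInt_plus_R, IH; auto. apply ex_RInt_vsum; auto.
Qed.

Lemma RInt_sqr_le (f : R -> R) u v : u <= v -> ex_RInt f u v -> ex_RInt (fun s => f s * f s) u v ->
  RInt f u v * RInt f u v <= (v - u) * RInt (fun s => f s * f s) u v.
Proof.
  intros Huv Hf Hf2. destruct (Req_dec u v) as [<-|Hne].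
  { rewrite RInt_point_R. lra. }
  set (I := RInt f u v). set (J := RInt (fun s => f s * f s) u v). set (c := I / (v - u)).
  (* expand [0 <= RInt (f - c)^2] with [c] the mean value of [f] *)
  assert (Hex : ex_RInt (fun s => f s * f s + (-2 * c) * f s) u v)
    by (apply ex_RInt_plus_R; [|apply ex_RInt_scal_R]; auto).
  assert (H0 : 0 <= RInt (fun s => (f s * f s + (-2 * c) * f s) + c * c) u v).
  { apply RInt_ge_0; [lra| |].
    - apply ex_RInt_plus_R; [exact Hex | apply ex_RInt_const].
    - intros s _. replace (f s * f s + -2 * c * f s + c * c) with ((f s - c) * (f s - c)) by ring.
      apply Rle_0_sqr. }
  rewrite RInt_plus_R, RInt_plus_R, RInt_scal_R, RInt_const_R in H0; auto;
    [|apply ex_RInt_scal_R; auto|apply ex_RInt_const].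
  fold I J in H0. unfold c in H0.
  replace (J + -2 * (I / (v - u)) * I + (v - u) * (I / (v - u) * (I / (v - u))))
    with (J - I * I / (v - u)) in H0 by (field; lra).
  replace (I * I) with ((v - u) * (I * I / (v - u))) by (field; lra).
  apply Rmult_le_compat_l; lra.
Qed.

Lemma RInt_le_affine (f h : R -> R) C2 C3 a b : a <= b -> ex_RInt f a b -> ex_RInt h a b ->
  (forall r, a < r < b -> f r <= C2 * h r + C3) ->
  RInt f a b <= C2 * RInt h a b + (b - a) * C3.
Proof.
  intros Hab Hf Hh Hb.
  assert (Hex : ex_RInt (fun r => C2 * h r + C3) a b)
    by (apply ex_RInt_plus_R; [apply ex_RInt_scal_R; auto | apply ex_RInt_const]).
  eapply Rle_trans; [apply (RInt_le f (fun r => C2 * h r + C3)); auto|].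
  rewrite RInt_plus_R, RInt_scal_R, RInt_const_R.
  - lra.
  - exact Hh.
  - apply ex_RInt_scal_R; exact Hh.
  - apply ex_RInt_const.
Qed.

Lemma vsum_RInt_sqr_le (G : nat -> R -> R) (h : R -> R) m c t T s :
  0 <= c -> t <= s <= t + T ->
  (forall i, (i < m)%nat ->
     ex_RInt (G i) t (t + T) /\ ex_RInt (fun r => G i r * G i r) t (t + T)) ->
  ex_RInt h t (t + T) ->
  (forall r, t < r < t + T -> vsum m (fun i => G i r * G i r) <= c * h r) ->
  vsum m (fun i => RInt (G i) t s * RInt (G i) t s) <= T * c * RInt h t (t + T).
Proof.
  intros Hc Hs HG Hh Hb.
  apply Rle_trans with (vsum m (fun i => T * RInt (fun r => G i r * G i r) t (t + T))).
  - apply vsum_le. intros i Hi. destruct (HG i Hi) as [H1 H2].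
    assert (E1 : ex_RInt (G i) t s) by exact (ex_RInt_Chasles_1 (G i) t s (t + T) ltac:(lra) H1).
    assert (E2 : ex_RInt (fun r => G i r * G i r) t s)
      by exact (ex_RInt_Chasles_1 _ t s (t + T) ltac:(lra) H2).
    assert (E3 : ex_RInt (fun r => G i r * G i r) s (t + T))
      by exact (ex_RInt_Chasles_2 _ t s (t + T) ltac:(lra) H2).
    eapply Rle_trans; [apply RInt_sqr_le; auto; lra|].
    rewrite <- (RInt_Chasles_R _ t s (t + T)); auto.
    assert (0 <= RInt (fun r => G i r * G i r) t s)
      by (apply RInt_ge_0; auto; [lra | intros; apply Rle_0_sqr]).
    assert (0 <= RInt (fun r => G i r * G i r) s (t + T))
      by (apply RInt_ge_0; auto; [lra | intros; apply Rle_0_sqr]).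
    assert ((s - t) * RInt (fun r => G i r * G i r) t s <= T * RInt (fun r => G i r * G i r) t s)
      by (apply Rmult_le_compat_r; lra).
    nra.
  - rewrite vsum_scal, Rmult_assoc. apply Rmult_le_compat_l; [lra|].
    rewrite <- RInt_vsum by (intros; apply HG; auto).
    rewrite <- RInt_scal_R by auto. apply RInt_le; auto; [lra| |].
    + apply ex_RInt_vsum; intros; apply HG; auto.
    + apply ex_RInt_scal_R; auto.
Qed.

Lemma locally_between (P : R -> Prop) p q s :
  p < s < q -> (forall y, p < y < q -> P y) -> locally s P.
Proof.
  intros Hs H. assert (He : 0 < Rmin (s - p) (q - s)) by (apply Rmin_pos; lra).
  exists (mkposreal _ He). intros y Hy. change (Rabs (y - s) < Rmin (s - p) (q - s)) in Hy.
  apply H. assert (Rmin (s - p) (q - s) <= s - p) by apply Rmin_l.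
  assert (Rmin (s - p) (q - s) <= q - s) by apply Rmin_r. split_Rabs; lra.
Qed.

Lemma Lipschitz_continuous (f : R -> R) L s : 0 <= L ->
  (forall u v, Rabs (f u - f v) <= L * Rabs (u - v)) -> continuous f s.
Proof.
  intros HL H. apply continuity_pt_filterlim. intros eps Heps.
  exists (eps / (L + 1)). split; [apply Rdiv_lt_0_compat; lra|].
  intros y [_ Hy]. simpl in *. unfold R_dist in *.
  eapply Rle_lt_trans; [apply H|].
  apply Rle_lt_trans with (L * (eps / (L + 1))); [apply Rmult_le_compat_l; lra|].
  apply Rlt_le_trans with ((L + 1) * (eps / (L + 1))).
  - apply Rmult_lt_compat_r; [apply Rdiv_lt_0_compat|]; lra.
  - right; field; lra.
Qed.

Lemma nonincreasing_of_derive_nonpos (F D : R -> R) a b : a <= b ->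
  (forall s, a < s < b -> is_derive F s (D s)) -> (forall s, a < s < b -> D s <= 0) ->
  (forall s, a <= s <= b -> continuous F s) -> F b <= F a.
Proof.
  intros Hab Hd HD Hc.
  destruct (MVT_gen F a b (fun s => Rmin 0 (D s))) as [c [_ Hc2]].
  - intros s Hs. rewrite Rmin_left in Hs by lra. rewrite Rmax_right in Hs by lra.
    rewrite Rmin_right by (apply HD; lra). apply Hd; lra.
  - intros s Hs. rewrite Rmin_left in Hs by lra. rewrite Rmax_right in Hs by lra.
    apply continuity_pt_filterlim, Hc; lra.
  - assert (Rmin 0 (D c) <= 0) by apply Rmin_l. nra.
Qed.

Lemma integral_form_Lipschitz (G f : R -> R) a b : a <= b ->
  (forall t, a <= t -> ex_RInt f a t /\ G t = G a + RInt f a t) ->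
  exists L, 0 <= L /\
    forall u v, a <= u <= b -> a <= v <= b -> Rabs (G u - G v) <= L * Rabs (u - v).
Proof.
  intros Hab H. destruct (H b Hab) as [Hex _].
  destruct (ex_RInt_ub f a b Hex) as [M HM].
  exists (Rmax 0 M). split; [apply Rmax_l|].
  assert (Hw : forall u v, a <= v <= u -> u <= b -> Rabs (G u - G v) <= Rmax 0 M * Rabs (u - v)).
  { intros u v Hv Hu. destruct (H u) as [Hu1 Hu2]; [lra|]. destruct (H v) as [Hv1 Hv2]; [lra|].
    assert (Hvu : ex_RInt f v u) by exact (ex_RInt_Chasles_2 f a v u ltac:(lra) Hu1).
    replace (G u - G v) with (RInt f v u)
      by (rewrite Hu2, Hv2, <- (RInt_Chasles_R f a v u); auto; lra).
    rewrite (Rabs_right (u - v)), Rmult_comm by lra.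
    apply abs_RInt_le_const; [lra|auto|]. intros t Ht.
    apply Rle_trans with M; [apply HM; rewrite Rmin_left, Rmax_right; lra | apply Rmax_r]. }
  intros u v Hu Hv. destruct (Rle_dec v u); [apply Hw; lra|].
  rewrite Rabs_minus_sym, (Rabs_minus_sym u). apply Hw; lra.
Qed.

Lemma is_derive_integral_form (G f : R -> R) a s : a < s ->
  (forall t, a <= t -> ex_RInt f a t /\ G t = G a + RInt f a t) -> continuous f s ->
  is_derive G s (f s).
Proof.
  intros Hs H Hf.
  apply is_derive_ext_loc with (fun r => G a + RInt f a r).
  - apply (locally_between _ a (s + 1) s); [lra|]. intros y Hy. symmetry; apply H; lra.
  - replace (f s) with (0 + f s) by ring. apply is_derive_plus_R; [exact (is_derive_const _ _)|].
    apply (is_derive_RInt f (fun r => RInt f a r) a s); auto.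
    apply (locally_between _ a (s + 1) s); [lra|]. intros y Hy.
    apply (RInt_correct (V := R_CompleteNormedModule)). apply H; lra.
Qed.

Definition clamp (p q s : R) := Rmax p (Rmin q s).

Lemma clamp_Lipschitz p q u v : p <= q -> Rabs (clamp p q u - clamp p q v) <= Rabs (u - v).
Proof. intros; unfold clamp, Rmax, Rmin. repeat destruct Rle_dec; split_Rabs; lra. Qed.
Lemma clamp_between p q s : p <= q -> p <= clamp p q s <= q.
Proof. intros; unfold clamp, Rmax, Rmin. repeat destruct Rle_dec; lra. Qed.
Lemma clamp_id p q s : p <= s <= q -> clamp p q s = s.
Proof. intros; unfold clamp, Rmax, Rmin. repeat destruct Rle_dec; lra. Qed.
Lemma continuous_clamp p q s : p <= q -> continuous (clamp p q) s.
Proof.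
  intros; apply Lipschitz_continuous with 1; [lra|].
  intros; rewrite Rmult_1_l; apply clamp_Lipschitz; auto.
Qed.

Lemma continuous_clamp_Lipschitz (G : R -> R) L p q s : p <= q -> 0 <= L ->
  (forall u v, p <= u <= q -> p <= v <= q -> Rabs (G u - G v) <= L * Rabs (u - v)) ->
  continuous (fun r => G (clamp p q r)) s.
Proof.
  intros Hpq HL H. apply Lipschitz_continuous with L; auto. intros u v.
  eapply Rle_trans; [apply H; apply clamp_between; auto|].
  apply Rmult_le_compat_l; auto. apply clamp_Lipschitz; auto.
Qed.

Section VectorField.
Variables (n : nat) (beta gamma mu : R) (thstar : nat -> R).
Hypotheses (hbeta : 0 < beta) (hgamma : 0 < gamma) (hmu : 0 < mu).

(* A state is [X = (theta, vartheta)]; [P] stands for the regressor value [phi t].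
   The analysis runs in the coordinates [w = vartheta - thstar] and [z = theta - vartheta]. *)
Definition theta_rate (P : nat -> R) (X : (nat -> R) * (nat -> R)) (i : nat) : R :=
  - beta * (fst X i - snd X i) * (1 + mu * dot n P P).
Definition vartheta_rate (P : nat -> R) (X : (nat -> R) * (nat -> R)) (i : nat) : R :=
  - gamma * P i * dot n P (vsub (fst X) thstar).

Definition werr (X : (nat -> R) * (nat -> R)) (i : nat) : R := snd X i - thstar i.
Definition zerr (X : (nat -> R) * (nat -> R)) (i : nat) : R := fst X i - snd X i.

Definition lyap (X : (nat -> R) * (nat -> R)) : R :=
  dot n (werr X) (werr X) + dot n (zerr X) (zerr X).
Definition dissipation (P : nat -> R) (X : (nat -> R) * (nat -> R)) : R :=
  beta * dot n (zerr X) (zerr X) + gamma * (dot n P (werr X) * dot n P (werr X)).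
Definition lyap_rate (P : nat -> R) (X : (nat -> R) * (nat -> R)) : R :=
  vsum n (fun i => vartheta_rate P X i * werr X i + werr X i * vartheta_rate P X i) +
  vsum n (fun i => (theta_rate P X i - vartheta_rate P X i) * zerr X i
                   + zerr X i * (theta_rate P X i - vartheta_rate P X i)).

Definition err_sq (X : (nat -> R) * (nat -> R)) : R :=
  dot n (vsub (fst X) thstar) (vsub (fst X) thstar)
  + dot n (vsub (snd X) thstar) (vsub (snd X) thstar).

Lemma err_eq_sqrt X : err_eq n thstar X = sqrt (err_sq X).
Proof. reflexivity. Qed.

Lemma err_sq_nonneg X : 0 <= err_sq X.
Proof.
  unfold err_sq. assert (H1 := dot_nonneg n (vsub (fst X) thstar)).
  assert (H2 := dot_nonneg n (vsub (snd X) thstar)). lra.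
Qed.

Lemma lyap_le_err_sq X : lyap X <= 3 * err_sq X.
Proof.
  unfold lyap, err_sq, dot. rewrite <- !vsum_plus, <- vsum_scal. apply vsum_le. intros i _.
  unfold werr, zerr, vsub. set (e := fst X i - thstar i). set (w := snd X i - thstar i).
  replace (fst X i - snd X i) with (e - w) by (unfold e, w; ring).
  assert (0 <= (e + w) * (e + w)) by apply Rle_0_sqr. nra.
Qed.

Lemma err_sq_le_lyap X : err_sq X <= 3 * lyap X.
Proof.
  unfold lyap, err_sq, dot. rewrite <- !vsum_plus, <- vsum_scal. apply vsum_le. intros i _.
  unfold werr, zerr, vsub. set (e := fst X i - thstar i). set (w := snd X i - thstar i).
  replace (fst X i - snd X i) with (e - w) by (unfold e, w; ring).
  assert (0 <= (e - 2 * w) * (e - 2 * w)) by apply Rle_0_sqr. nra.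
Qed.

Lemma dissipation_nonneg P X : 0 <= dissipation P X.
Proof.
  unfold dissipation. assert (0 <= dot n (zerr X) (zerr X)) by apply dot_nonneg.
  assert (0 <= dot n P (werr X) * dot n P (werr X)) by apply Rle_0_sqr. nra.
Qed.

Lemma beta_zerr_le_dissipation P X : beta * dot n (zerr X) (zerr X) <= dissipation P X.
Proof.
  unfold dissipation. assert (0 <= dot n P (werr X) * dot n P (werr X)) by apply Rle_0_sqr. nra.
Qed.

Lemma gamma_werr_le_dissipation P X :
  gamma * (dot n P (werr X) * dot n P (werr X)) <= dissipation P X.
Proof. unfold dissipation. assert (0 <= dot n (zerr X) (zerr X)) by apply dot_nonneg. nra. Qed.

Lemma phi_state_error P X : dot n P (vsub (fst X) thstar) = dot n P (werr X) + dot n P (zerr X).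
Proof. rewrite <- dot_plus_r. apply vsum_ext; intros. unfold vsub, werr, zerr. ring. Qed.

Lemma lyap_rate_le (hbg : 2 * gamma <= beta * mu) P X : lyap_rate P X + 2 * dissipation P X <= 0.
Proof.
  unfold lyap_rate, dissipation.
  set (A := dot n P (werr X)). set (B := dot n P (zerr X)). set (Z := dot n (zerr X) (zerr X)).
  set (PP := dot n P P).
  assert (Hw : vsum n (fun i => vartheta_rate P X i * werr X i + werr X i * vartheta_rate P X i)
               = -2 * gamma * (A + B) * A).
  { transitivity (-2 * gamma * (A + B) * vsum n (fun i => P i * werr X i)); [|reflexivity].
    rewrite <- vsum_scal. apply vsum_ext; intros.
    unfold vartheta_rate. rewrite phi_state_error. fold A B. ring. }
  assert (Hz : vsum n (fun i => (theta_rate P X i - vartheta_rate P X i) * zerr X i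
                               + zerr X i * (theta_rate P X i - vartheta_rate P X i))
               = -2 * beta * (1 + mu * PP) * Z + 2 * gamma * (A + B) * B).
  { transitivity (-2 * beta * (1 + mu * PP) * vsum n (fun i => zerr X i * zerr X i)
                  + 2 * gamma * (A + B) * vsum n (fun i => P i * zerr X i)); [|reflexivity].
    rewrite <- !vsum_scal, <- vsum_plus. apply vsum_ext; intros.
    unfold theta_rate, vartheta_rate. rewrite phi_state_error. fold A B PP. unfold zerr. ring. }
  rewrite Hw, Hz.
  (* the cross terms cancel and Cauchy-Schwarz [B^2 <= |P|^2 Z] absorbs the rest *)
  assert (HCS : B * B <= PP * Z) by apply dot_Cauchy_Schwarz.
  assert (0 <= PP * Z) by (apply Rmult_le_pos; apply dot_nonneg).
  assert (2 * gamma * (PP * Z) <= beta * mu * (PP * Z)) by (apply Rmult_le_compat_r; lra).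
  nra.
Qed.

Definition vartheta_rate_gain (K : R) : R := 2 * (gamma * gamma) * K * (1 / gamma + K / beta).
Definition zerr_rate_gain (K : R) : R :=
  2 * beta * ((1 + mu * K) * (1 + mu * K)) + 2 * vartheta_rate_gain K.

Lemma vartheta_rate_gain_nonneg K : 0 <= K -> 0 <= vartheta_rate_gain K.
Proof.
  intros HK. unfold vartheta_rate_gain.
  assert (0 < 1 / gamma) by (apply Rdiv_lt_0_compat; lra).
  assert (0 <= K / beta) by (apply Rdiv_le_0_compat; lra).
  assert (0 <= gamma * gamma) by nra. apply Rmult_le_pos; [|lra]. nra.
Qed.

Lemma zerr_rate_gain_nonneg K : 0 <= K -> 0 <= zerr_rate_gain K.
Proof.
  intros HK. unfold zerr_rate_gain. assert (H := vartheta_rate_gain_nonneg K HK).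
  assert (0 <= (1 + mu * K) * (1 + mu * K)) by apply Rle_0_sqr. nra.
Qed.

Lemma vartheta_rate_sqr_le K P X : dot n P P <= K ->
  vsum n (fun i => vartheta_rate P X i * vartheta_rate P X i)
  <= vartheta_rate_gain K * dissipation P X.
Proof.
  intros HP. assert (HK : 0 <= K) by (assert (H := dot_nonneg n P); lra).
  unfold dissipation.
  set (A := dot n P (werr X)). set (B := dot n P (zerr X)). set (Z := dot n (zerr X) (zerr X)).
  set (PP := dot n P P) in *.
  assert (E : vsum n (fun i => vartheta_rate P X i * vartheta_rate P X i)
              = gamma * gamma * ((A + B) * (A + B)) * PP).
  { transitivity (gamma * gamma * ((A + B) * (A + B)) * vsum n (fun i => P i * P i));
      [|reflexivity].
    rewrite <- vsum_scal. apply vsum_ext; intros.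
    unfold vartheta_rate. rewrite phi_state_error. fold A B. ring. }
  rewrite E.
  assert (HB : B * B <= K * Z).
  { apply Rle_trans with (PP * Z); [apply dot_Cauchy_Schwarz|].
    apply Rmult_le_compat_r; [apply dot_nonneg|lra]. }
  assert (Hab : (A + B) * (A + B) <= 2 * (A * A) + 2 * (K * Z))
    by (assert (0 <= (A - B) * (A - B)) by apply Rle_0_sqr; nra).
  assert (S1 : gamma * gamma * ((A + B) * (A + B)) * PP
               <= gamma * gamma * (2 * (A * A) + 2 * (K * Z)) * K).
  { apply Rle_trans with (gamma * gamma * ((A + B) * (A + B)) * K).
    - apply Rmult_le_compat_l; [|lra]. apply Rmult_le_pos; [nra|apply Rle_0_sqr].
    - apply Rmult_le_compat_r; [lra|]. apply Rmult_le_compat_l; nra. }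
  eapply Rle_trans; [apply S1|]. unfold vartheta_rate_gain.
  replace (2 * (gamma * gamma) * K * (1 / gamma + K / beta) * (beta * Z + gamma * (A * A)))
    with (gamma * gamma * (2 * (A * A) + 2 * (K * Z)) * K + 2 * gamma * K * (beta * Z)
          + 2 * (gamma * gamma * gamma) * (K * K) / beta * (A * A)) by (field; lra).
  assert (0 <= Z) by apply dot_nonneg.
  assert (0 <= 2 * gamma * K * (beta * Z)) by (apply Rmult_le_pos; nra).
  assert (0 <= 2 * (gamma * gamma * gamma) * (K * K) / beta * (A * A)).
  { apply Rmult_le_pos; [|apply Rle_0_sqr]. apply Rdiv_le_0_compat; [|lra].
    assert (0 <= K * K) by nra. assert (0 <= gamma * gamma * gamma) by nra. nra. }
  lra.
Qed.

Lemma zerr_rate_sqr_le K P X : dot n P P <= K ->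
  vsum n (fun i => (theta_rate P X i - vartheta_rate P X i)
                   * (theta_rate P X i - vartheta_rate P X i))
  <= zerr_rate_gain K * dissipation P X.
Proof.
  intros HP. assert (HK : 0 <= K) by (assert (H := dot_nonneg n P); lra).
  apply Rle_trans with (2 * vsum n (fun i => theta_rate P X i * theta_rate P X i) +
                        2 * vsum n (fun i => vartheta_rate P X i * vartheta_rate P X i)).
  { rewrite <- !vsum_scal, <- vsum_plus. apply vsum_le. intros i _.
    set (a := theta_rate P X i). set (b := vartheta_rate P X i).
    assert (0 <= (a + b) * (a + b)) by apply Rle_0_sqr. nra. }
  assert (Hv := vartheta_rate_sqr_le K P X HP).
  assert (Ht : vsum n (fun i => theta_rate P X i * theta_rate P X i)
               <= beta * ((1 + mu * K) * (1 + mu * K)) * dissipation P X).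
  { set (PP := dot n P P) in *. set (Z := dot n (zerr X) (zerr X)).
    assert (E : vsum n (fun i => theta_rate P X i * theta_rate P X i)
                = beta * ((1 + mu * PP) * (1 + mu * PP)) * (beta * Z)).
    { transitivity (beta * ((1 + mu * PP) * (1 + mu * PP)) * beta
                    * vsum n (fun i => zerr X i * zerr X i));
        [|unfold Z, dot; ring].
      rewrite <- vsum_scal. apply vsum_ext; intros. unfold theta_rate. fold PP. unfold zerr. ring. }
    rewrite E.
    assert (HZ : beta * Z <= dissipation P X) by apply beta_zerr_le_dissipation.
    assert (0 <= beta * Z) by (assert (0 <= Z) by apply dot_nonneg; nra).
    assert (0 <= PP) by apply dot_nonneg.
    assert (mu * PP <= mu * K) by (apply Rmult_le_compat_l; lra).
    assert (0 <= mu * PP) by (apply Rmult_le_pos; lra).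
    apply Rmult_le_compat; auto.
    - apply Rmult_le_pos; [lra|apply Rle_0_sqr].
    - apply Rmult_le_compat_l; [lra|]. apply Rmult_le_compat; lra. }
  unfold zerr_rate_gain. assert (0 <= dissipation P X) by apply dissipation_nonneg. nra.
Qed.

Definition window_gain (K T delta : R) : R :=
  (2 / gamma + 2 * K * T * T * vartheta_rate_gain K) / delta
  + (2 / beta + 2 * T * T * zerr_rate_gain K) / T.

Lemma window_gain_nonneg K T delta : 0 <= K -> 0 < T -> 0 < delta -> 0 <= window_gain K T delta.
Proof.
  intros HK HT Hd. unfold window_gain.
  assert (H3 := vartheta_rate_gain_nonneg K HK). assert (H2 := zerr_rate_gain_nonneg K HK).
  assert (0 <= 2 / gamma) by (apply Rdiv_le_0_compat; lra).
  assert (0 <= 2 / beta) by (apply Rdiv_le_0_compat; lra).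
  assert (0 <= K * T * T * vartheta_rate_gain K)
    by (apply Rmult_le_pos; [repeat apply Rmult_le_pos|]; lra).
  assert (0 <= T * T * zerr_rate_gain K) by (apply Rmult_le_pos; [repeat apply Rmult_le_pos|]; lra).
  apply Rplus_le_le_0_compat; apply Rdiv_le_0_compat; lra.
Qed.

Definition contraction_rate (K T delta : R) : R := 1 - 1 / (window_gain K T delta + 1).

Lemma contraction_rate_bounds K T delta : 0 <= K -> 0 < T -> 0 < delta ->
  0 <= contraction_rate K T delta < 1.
Proof.
  intros HK HT Hd. unfold contraction_rate.
  assert (H := window_gain_nonneg K T delta HK HT Hd).
  assert (0 < 1 / (window_gain K T delta + 1)) by (apply Rdiv_lt_0_compat; lra).
  assert (1 / (window_gain K T delta + 1) <= 1).
  { apply Rmult_le_reg_l with (window_gain K T delta + 1); [lra|].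
    field_simplify; lra. }
  lra.
Qed.

End VectorField.

Lemma increasing_seq_le (p : nat -> R) k : (forall j, (j < k)%nat -> p j < p (S j)) ->
  forall i j, (i <= j <= k)%nat -> p i <= p j.
Proof.
  intros Hinc i j. induction j as [|j IH]; intros Hj.
  - replace i with O by lia. lra.
  - destruct (Nat.eq_dec i (S j)) as [->|Hne]; [lra|].
    assert (p i <= p j) by (apply IH; lia). assert (p j < p (S j)) by (apply Hinc; lia). lra.
Qed.

Definition continuous_piece (n : nat) (phi g : R -> nat -> R) (p q : R) : Prop :=
  forall i, (i < n)%nat ->
    (forall s, p <= s <= q -> continuous (fun r => g r i) s) /\
    (forall s, p < s < q -> phi s i = g s i).

Lemma piecewise_continuous_induction n phi (Q : R -> Prop) a b :
  piecewise_continuous n phi -> 0 <= a <= b -> Q a ->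
  (forall g p q, a <= p < q -> q <= b -> continuous_piece n phi g p q -> Q p -> Q q) -> Q b.
Proof.
  intros hpc [Ha Hab] HQa Hstep.
  destruct (Req_dec a b) as [<-|Hne]; [exact HQa|].
  destruct (hpc a b Ha ltac:(lra)) as [k [p [H0 [Hk [Hinc Hpieces]]]]].
  assert (Hle := increasing_seq_le p k Hinc).
  rewrite <- Hk. enough (H : forall j, (j <= k)%nat -> Q (p j)) by (apply H; lia).
  induction j as [|j IH]; intros Hj; [rewrite H0; exact HQa|].
  destruct (Hpieces j ltac:(lia)) as [g Hg].
  apply (Hstep g (p j) (p (S j))); auto.
  - rewrite <- H0. split; [apply Hle; lia | apply Hinc; lia].
  - rewrite <- Hk. apply Hle; lia.
  - apply IH; lia.
Qed.

Definition preserves_continuity (n : nat) (E : (nat -> R) -> (nat -> R) * (nat -> R) -> R) :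
  Prop :=
  forall (P : R -> nat -> R) (X : R -> (nat -> R) * (nat -> R)) s,
    (forall i, (i < n)%nat -> continuous (fun r => P r i) s) ->
    (forall i, (i < n)%nat -> continuous (fun r => fst (X r) i) s) ->
    (forall i, (i < n)%nat -> continuous (fun r => snd (X r) i) s) ->
    continuous (fun r => E (P r) (X r)) s.

Ltac continuity_R HP HX HY := repeat match goal with
  | |- continuous (fun s => ?c) _ => apply continuous_const
  | |- continuous (fun s => _ + _) _ => apply continuous_plus_R
  | |- continuous (fun s => _ - _) _ => apply continuous_minus_R
  | |- continuous (fun s => _ * _) _ => apply continuous_mult_R
  | |- continuous (fun s => vsum _ _) _ => apply continuous_vsum; intros
  | |- continuous (fun s => fst _ _) _ => apply HX; lia
  | |- continuous (fun s => snd _ _) _ => apply HY; lia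
  | |- continuous (fun s => _ _ _) _ => apply HP; lia
  end.

Lemma theta_rate_preserves_continuity n beta mu i : (i < n)%nat ->
  preserves_continuity n (fun P X => theta_rate n beta mu P X i).
Proof. intros Hi P X s HP HX HY. unfold theta_rate, dot. continuity_R HP HX HY. Qed.
Lemma vartheta_rate_preserves_continuity n gamma thstar i : (i < n)%nat ->
  preserves_continuity n (fun P X => vartheta_rate n gamma thstar P X i).
Proof. intros Hi P X s HP HX HY. unfold vartheta_rate, dot, vsub. continuity_R HP HX HY. Qed.
Lemma dissipation_preserves_continuity n beta gamma thstar :
  preserves_continuity n (dissipation n beta gamma thstar).
Proof. intros P X s HP HX HY. unfold dissipation, dot, zerr, werr. continuity_R HP HX HY. Qed.
Lemma lyap_preserves_continuity n thstar : preserves_continuity n (fun _ X => lyap n thstar X).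
Proof. intros P X s HP HX HY. unfold lyap, dot, zerr, werr. continuity_R HP HX HY. Qed.
Lemma preserves_continuity_minus n E F : preserves_continuity n E -> preserves_continuity n F ->
  preserves_continuity n (fun P X => E P X - F P X).
Proof. intros HE HF P X s HP HX HY. apply continuous_minus_R; [apply HE | apply HF]; auto. Qed.
Lemma preserves_continuity_mult n E F : preserves_continuity n E -> preserves_continuity n F ->
  preserves_continuity n (fun P X => E P X * F P X).
Proof. intros HE HF P X s HP HX HY. apply continuous_mult_R; [apply HE | apply HF]; auto. Qed.

Section Solution.
Variables (n : nat) (beta gamma mu : R) (phi : R -> nat -> R) (thstar : nat -> R)
  (t0 : R) (x : R -> (nat -> R) * (nat -> R)).
Hypotheses (hbeta : 0 < beta) (hgamma : 0 < gamma) (hmu : 0 < mu) (hbg : 2 * gamma <= beta * mu)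
  (ht0 : 0 <= t0).
Hypothesis hsol : is_solution n beta gamma mu phi thstar t0 x.
Hypothesis hpc : piecewise_continuous n phi.

Notation theta_rate_at i := (fun r => theta_rate n beta mu (phi r) (x r) i).
Notation vartheta_rate_at i := (fun r => vartheta_rate n gamma thstar (phi r) (x r) i).
Notation zerr_rate_at i :=
  (fun r => theta_rate n beta mu (phi r) (x r) i - vartheta_rate n gamma thstar (phi r) (x r) i).

Lemma theta_integral_form i : (i < n)%nat -> forall t, t0 <= t ->
  ex_RInt (theta_rate_at i) t0 t /\
  fst (x t) i = fst (x t0) i + RInt (theta_rate_at i) t0 t.
Proof. intros Hi t Ht. destruct (hsol t Ht i Hi) as [H1 [_ [H3 _]]]. split; assumption. Qed.

Lemma vartheta_integral_form i : (i < n)%nat -> forall t, t0 <= t ->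
  ex_RInt (vartheta_rate_at i) t0 t /\
  snd (x t) i = snd (x t0) i + RInt (vartheta_rate_at i) t0 t.
Proof. intros Hi t Ht. destruct (hsol t Ht i Hi) as [_ [H2 [_ H4]]]. split; assumption. Qed.

(* On a continuity piece [[p, q]] the regressor and the state are extended continuously to all
   of [R] by freezing them at the endpoints; the extensions agree with [phi] and [x] on [(p, q)].
   Coordinates [i >= n] are left equal to [phi], so that the agreement is an equality of vectors. *)
Definition clamped_regressor (g : R -> nat -> R) (p q s : R) : nat -> R :=
  fun i => if (i <? n)%nat then g (clamp p q s) i else phi s i.
Definition clamped_state (p q s : R) : (nat -> R) * (nat -> R) := x (clamp p q s).

Lemma clamped_regressor_eq g p q s :
  continuous_piece n phi g p q -> p < s < q -> clamped_regressor g p q s = phi s.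
Proof.
  intros Hg Hs. apply functional_extensionality. intros i. unfold clamped_regressor.
  destruct (Nat.ltb_spec i n) as [Hi|]; auto.
  rewrite clamp_id by lra. symmetry; apply (proj2 (Hg i Hi)); auto.
Qed.

Lemma clamped_state_eq p q s : p <= s <= q -> clamped_state p q s = x s.
Proof. intros; unfold clamped_state; rewrite clamp_id; auto. Qed.

Lemma continuous_clamped E g p q s : preserves_continuity n E -> t0 <= p <= q ->
  continuous_piece n phi g p q ->
  continuous (fun r => E (clamped_regressor g p q r) (clamped_state p q r)) s.
Proof.
  intros HE Hpq Hg. apply HE; intros i Hi.
  - unfold clamped_regressor. replace (i <? n)%nat with true by (symmetry; apply Nat.ltb_lt; auto).
    apply (continuous_comp (clamp p q) (fun r => g r i)); [apply continuous_clamp; lra|].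
    apply (proj1 (Hg i Hi)). apply clamp_between; lra.
  - destruct (integral_form_Lipschitz _ _ t0 q ltac:(lra) (theta_integral_form i Hi))
      as [L [HL HLip]].
    apply (continuous_clamp_Lipschitz (fun r => fst (x r) i) L); auto; [lra|].
    intros; apply HLip; lra.
  - destruct (integral_form_Lipschitz _ _ t0 q ltac:(lra) (vartheta_integral_form i Hi))
      as [L [HL HLip]].
    apply (continuous_clamp_Lipschitz (fun r => snd (x r) i) L); auto; [lra|].
    intros; apply HLip; lra.
Qed.

Lemma continuous_on_piece E g p q s : preserves_continuity n E -> t0 <= p ->
  continuous_piece n phi g p q -> p < s < q -> continuous (fun r => E (phi r) (x r)) s.
Proof.
  intros HE Hp Hg Hs.
  apply continuous_ext_loc with (fun r => E (clamped_regressor g p q r) (clamped_state p q r)).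
  - apply (locally_between _ p q s Hs). intros y Hy.
    rewrite clamped_regressor_eq, clamped_state_eq; auto; lra.
  - apply continuous_clamped; auto; lra.
Qed.

Lemma ex_RInt_on_piece E g p q : preserves_continuity n E -> t0 <= p <= q ->
  continuous_piece n phi g p q -> ex_RInt (fun r => E (phi r) (x r)) p q.
Proof.
  intros HE Hpq Hg.
  apply ex_RInt_ext with (fun r => E (clamped_regressor g p q r) (clamped_state p q r)).
  - intros r Hr. rewrite Rmin_left in Hr by lra. rewrite Rmax_right in Hr by lra.
    rewrite clamped_regressor_eq, clamped_state_eq; auto; lra.
  - apply (ex_RInt_continuous (V := R_CompleteNormedModule)).
    intros; apply continuous_clamped; auto.
Qed.

Lemma ex_RInt_along_solution E a b : preserves_continuity n E -> t0 <= a <= b ->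
  ex_RInt (fun r => E (phi r) (x r)) a b.
Proof.
  intros HE Hab.
  apply (piecewise_continuous_induction n phi
           (fun c => ex_RInt (fun r => E (phi r) (x r)) a c) a b);
    auto; [lra | apply ex_RInt_point|].
  intros g p q Hpq Hqb Hg Hp. apply ex_RInt_Chasles with p; auto.
  apply (ex_RInt_on_piece E g); auto; lra.
Qed.

Lemma is_derive_theta g p q s i : t0 <= p -> continuous_piece n phi g p q -> p < s < q ->
  (i < n)%nat -> is_derive (fun r => fst (x r) i) s (theta_rate n beta mu (phi s) (x s) i).
Proof.
  intros Hp Hg Hs Hi.
  apply (is_derive_integral_form (fun r => fst (x r) i) (theta_rate_at i) t0);
    [lra | apply theta_integral_form; auto|].
  apply (continuous_on_piece (fun P X => theta_rate n beta mu P X i) g p q); auto.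
  apply theta_rate_preserves_continuity; auto.
Qed.

Lemma is_derive_vartheta g p q s i : t0 <= p -> continuous_piece n phi g p q -> p < s < q ->
  (i < n)%nat -> is_derive (fun r => snd (x r) i) s (vartheta_rate n gamma thstar (phi s) (x s) i).
Proof.
  intros Hp Hg Hs Hi.
  apply (is_derive_integral_form (fun r => snd (x r) i) (vartheta_rate_at i) t0);
    [lra | apply vartheta_integral_form; auto|].
  apply (continuous_on_piece (fun P X => vartheta_rate n gamma thstar P X i) g p q); auto.
  apply vartheta_rate_preserves_continuity; auto.
Qed.

Lemma is_derive_lyap g p q s : t0 <= p -> continuous_piece n phi g p q -> p < s < q ->
  is_derive (fun r => lyap n thstar (x r)) s (lyap_rate n beta gamma mu thstar (phi s) (x s)).
Proof.
  intros Hp Hg Hs. apply is_derive_plus_R.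
  - apply (is_derive_dot_self n (fun r => werr thstar (x r))). intros i Hi. unfold werr.
    rewrite <- (Rminus_0_r (vartheta_rate _ _ _ _ _ i)).
    apply is_derive_minus_R; [eapply is_derive_vartheta; eauto | exact (is_derive_const _ _)].
  - apply (is_derive_dot_self n (fun r => zerr (x r))). intros i Hi.
    apply is_derive_minus_R; [eapply is_derive_theta | eapply is_derive_vartheta]; eauto.
Qed.

Notation dissip := (fun r => dissipation n beta gamma thstar (phi r) (x r)).

Lemma lyap_dissipation_on_piece g p q : t0 <= p < q -> continuous_piece n phi g p q ->
  lyap n thstar (x q) + 2 * RInt dissip p q <= lyap n thstar (x p).
Proof.
  intros Hp Hg.
  set (dc := fun r =>
         dissipation n beta gamma thstar (clamped_regressor g p q r) (clamped_state p q r)).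
  assert (Hdc : forall r, continuous dc r).
  { intros r. apply continuous_clamped; [apply dissipation_preserves_continuity | lra | auto]. }
  assert (Hint : forall r, is_derive (fun u => RInt dc p u) r (dc r)).
  { intros r. apply (is_derive_RInt dc (fun u => RInt dc p u) p r); auto.
    exists (mkposreal 1 Rlt_0_1). intros y _.
    apply (RInt_correct (V := R_CompleteNormedModule)).
    apply (ex_RInt_continuous (V := R_CompleteNormedModule)). intros; auto. }
  set (H := fun r => lyap n thstar (clamped_state p q r) + 2 * RInt dc p r).
  assert (HH : H q <= H p).
  { apply (nonincreasing_of_derive_nonpos H
             (fun r => lyap_rate n beta gamma mu thstar (phi r) (x r) + 2 * dissip r)); [lra| | |].
    - intros r Hr. unfold H. apply is_derive_plus_R.
      + apply is_derive_ext_loc with (fun u => lyap n thstar (x u)).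
        * apply (locally_between _ p q r Hr). intros y Hy. rewrite clamped_state_eq; auto; lra.
        * eapply is_derive_lyap; eauto. lra.
      + replace (dissip r) with (dc r)
          by (unfold dc; rewrite clamped_regressor_eq, clamped_state_eq; auto; lra).
        apply is_derive_scal, Hint.
    - intros r _. apply lyap_rate_le; auto.
    - intros r Hr. unfold H. apply continuous_plus_R.
      + apply (continuous_clamped (fun _ X => lyap n thstar X) g); auto;
          [apply lyap_preserves_continuity | lra].
      + apply continuous_mult_R; [apply continuous_const|].
        apply (@ex_derive_continuous R_AbsRing R_NormedModule (fun u => RInt dc p u)).
        exists (dc r). apply Hint. }
  unfold H in HH. rewrite RInt_point_R, !clamped_state_eq in HH; try lra.
  replace (RInt dissip p q) with (RInt dc p q); [lra|].
  apply RInt_ext. intros r Hr. rewrite Rmin_left in Hr by lra. rewrite Rmax_right in Hr by lra.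
  unfold dc. rewrite clamped_regressor_eq, clamped_state_eq; auto; lra.
Qed.

Lemma ex_RInt_dissipation a b : t0 <= a <= b -> ex_RInt dissip a b.
Proof.
  intros. apply (ex_RInt_along_solution (dissipation n beta gamma thstar)); auto.
  apply dissipation_preserves_continuity.
Qed.

Lemma RInt_dissipation_nonneg a b : t0 <= a <= b -> 0 <= RInt dissip a b.
Proof.
  intros. apply RInt_ge_0; [lra | apply ex_RInt_dissipation; auto |].
  intros; apply dissipation_nonneg; lra.
Qed.

Lemma lyap_dissipation a b : t0 <= a <= b ->
  lyap n thstar (x b) + 2 * RInt dissip a b <= lyap n thstar (x a).
Proof.
  intros Hab.
  apply (piecewise_continuous_induction n phi
           (fun c => lyap n thstar (x c) + 2 * RInt dissip a c <= lyap n thstar (x a)) a b); auto;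
    [lra | rewrite RInt_point_R; lra|].
  intros g p q Hpq Hqb Hg IH.
  rewrite <- (RInt_Chasles_R _ a p q) by (apply ex_RInt_dissipation; lra).
  assert (Hm := lyap_dissipation_on_piece g p q ltac:(lra) Hg). lra.
Qed.

Lemma lyap_nonincreasing a b : t0 <= a <= b -> lyap n thstar (x b) <= lyap n thstar (x a).
Proof.
  intros. assert (H1 := lyap_dissipation a b H). assert (H2 := RInt_dissipation_nonneg a b H). lra.
Qed.

Variables (K T delta : R).
Hypotheses (hK : forall t, 0 <= t -> dot n (phi t) (phi t) <= K) (hT : 0 < T) (hd : 0 < delta).
Hypothesis hPE : forall t, 0 <= t -> forall v : nat -> R,
  vsum n (fun i => vsum n (fun j => v i * gram phi t T i j * v j)) >= delta * dot n v v.

Lemma K_nonneg : 0 <= K.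
Proof. assert (H := hK 0 (Rle_refl 0)). assert (H0 := dot_nonneg n (phi 0)). lra. Qed.

Lemma ex_RInt_theta_rate i a b : (i < n)%nat -> t0 <= a <= b ->
  ex_RInt (theta_rate_at i) a b.
Proof.
  intros Hi Hab. apply (ex_RInt_along_solution (fun P X => theta_rate n beta mu P X i)); auto.
  apply theta_rate_preserves_continuity; auto.
Qed.

Lemma ex_RInt_vartheta_rate i a b : (i < n)%nat -> t0 <= a <= b ->
  ex_RInt (vartheta_rate_at i) a b.
Proof.
  intros Hi Hab.
  apply (ex_RInt_along_solution (fun P X => vartheta_rate n gamma thstar P X i)); auto.
  apply vartheta_rate_preserves_continuity; auto.
Qed.

Lemma werr_increment t s i : t0 <= t <= s -> (i < n)%nat ->
  werr thstar (x s) i - werr thstar (x t) i = RInt (vartheta_rate_at i) t s.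
Proof.
  intros Hts Hi.
  destruct (vartheta_integral_form i Hi s ltac:(lra)) as [Hs1 Hs2].
  destruct (vartheta_integral_form i Hi t ltac:(lra)) as [Ht1 Ht2].
  unfold werr. rewrite Hs2, Ht2, <- (RInt_Chasles_R _ t0 t s); auto; [lra|].
  apply ex_RInt_vartheta_rate; auto; lra.
Qed.

Lemma zerr_increment t s i : t0 <= t <= s -> (i < n)%nat ->
  zerr (x s) i - zerr (x t) i = RInt (zerr_rate_at i) t s.
Proof.
  intros Hts Hi.
  destruct (theta_integral_form i Hi s ltac:(lra)) as [_ Hs].
  destruct (theta_integral_form i Hi t ltac:(lra)) as [Ht1 Ht].
  rewrite (RInt_minus_R _ _ t s (ex_RInt_theta_rate i t s Hi ltac:(lra))
                               (ex_RInt_vartheta_rate i t s Hi ltac:(lra))).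
  rewrite <- werr_increment by auto.
  rewrite <- (RInt_Chasles_R _ t0 t s) in Hs by (auto; apply (ex_RInt_theta_rate i t s Hi); lra).
  unfold zerr, werr. lra.
Qed.

Lemma zerr_window_bound t : t0 <= t ->
  T * dot n (zerr (x t)) (zerr (x t))
  <= (2 / beta + 2 * T * T * zerr_rate_gain beta gamma mu K) * RInt dissip t (t + T).
Proof.
  intros Ht. set (D := RInt dissip t (t + T)). set (Zt := dot n (zerr (x t)) (zerr (x t))).
  set (c := zerr_rate_gain beta gamma mu K).
  assert (HD : 0 <= D) by (apply RInt_dissipation_nonneg; lra).
  assert (Hc : 0 <= c) by (apply zerr_rate_gain_nonneg; auto; apply K_nonneg).
  assert (Hpt : forall r, t < r < t + T -> beta * Zt <= 2 * dissip r + 2 * beta * T * c * D).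
  { intros r Hr.
    set (dz := fun i => zerr (x r) i - zerr (x t) i).
    assert (Hdz : dot n dz dz <= T * c * D).
    { unfold dot, dz.
      rewrite (vsum_ext n _ (fun i => RInt (zerr_rate_at i) t r * RInt (zerr_rate_at i) t r))
        by (intros i Hi; rewrite zerr_increment; auto; lra).
      apply vsum_RInt_sqr_le; auto; [lra| |apply ex_RInt_dissipation; lra|].
      - intros i Hi.
        set (E := fun P X => theta_rate n beta mu P X i - vartheta_rate n gamma thstar P X i).
        assert (HE : preserves_continuity n E) by (apply preserves_continuity_minus;
          [apply theta_rate_preserves_continuity | apply vartheta_rate_preserves_continuity]; auto).
        split; [apply (ex_RInt_along_solution E) |
                apply (ex_RInt_along_solution (fun P X => E P X * E P X))];
          auto; [lra | apply preserves_continuity_mult; auto | lra].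
      - intros r' Hr'. apply zerr_rate_sqr_le; auto. apply hK; lra. }
    assert (HZ : Zt <= 2 * dot n (zerr (x r)) (zerr (x r)) + 2 * dot n dz dz).
    { unfold Zt, dot, dz. rewrite <- !vsum_scal, <- vsum_plus. apply vsum_le. intros i _.
      set (a := zerr (x r) i). set (b := zerr (x t) i).
      assert (0 <= (2 * a - b) * (2 * a - b)) by apply Rle_0_sqr. nra. }
    assert (Hq := beta_zerr_le_dissipation n beta gamma thstar hgamma (phi r) (x r)).
    nra. }
  assert (HI := RInt_le_affine (fun _ => beta * Zt) dissip 2 (2 * beta * T * c * D) t (t + T)
                  ltac:(lra) (ex_RInt_const _ _ _) ltac:(apply ex_RInt_dissipation; lra) Hpt).
  rewrite RInt_const_R in HI. fold D in HI. replace (t + T - t) with T in HI by ring.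
  apply Rmult_le_reg_l with beta; auto.
  replace (beta * ((2 / beta + 2 * T * T * c) * D)) with (2 * D + T * (2 * beta * T * c * D))
    by (field; lra).
  lra.
Qed.

Lemma gram_quadratic_form t v : t0 <= t ->
  vsum n (fun i => vsum n (fun j => v i * gram phi t T i j * v j)) =
  RInt (fun r => dot n (phi r) v * dot n (phi r) v) t (t + T).
Proof.
  intros Ht.
  assert (Hex : forall i j, (i < n)%nat -> (j < n)%nat ->
                 ex_RInt (fun r => phi r i * phi r j) t (t + T)).
  { intros i j Hi Hj. apply (ex_RInt_along_solution (fun P _ => P i * P j)); [|lra].
    intros P X s HP _ _. apply continuous_mult_R; auto. }
  rewrite (RInt_ext _
             (fun r => vsum n (fun i => vsum n (fun j => (v i * v j) * (phi r i * phi r j)))))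
    by (intros r _; unfold dot; rewrite vsum_mult;
        apply vsum_ext; intros; apply vsum_ext; intros; ring).
  rewrite RInt_vsum.
  - apply vsum_ext. intros i Hi. rewrite RInt_vsum by (intros; apply ex_RInt_scal_R, Hex; auto).
    apply vsum_ext. intros j Hj. rewrite RInt_scal_R by (apply Hex; auto). unfold gram. ring.
  - intros i Hi. apply ex_RInt_vsum. intros j Hj. apply ex_RInt_scal_R, Hex; auto.
Qed.

Lemma werr_window_bound t : t0 <= t ->
  delta * dot n (werr thstar (x t)) (werr thstar (x t))
  <= (2 / gamma + 2 * K * T * T * vartheta_rate_gain beta gamma K) * RInt dissip t (t + T).
Proof.
  intros Ht. set (D := RInt dissip t (t + T)). set (wt := werr thstar (x t)).
  set (c := vartheta_rate_gain beta gamma K).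
  assert (HD : 0 <= D) by (apply RInt_dissipation_nonneg; lra).
  assert (Hc : 0 <= c) by (apply vartheta_rate_gain_nonneg; auto; apply K_nonneg).
  assert (HP := hPE t ltac:(lra) wt). rewrite gram_quadratic_form in HP by lra.
  assert (Hpt : forall r, t < r < t + T ->
            dot n (phi r) wt * dot n (phi r) wt <= (2 / gamma) * dissip r + 2 * K * T * c * D).
  { intros r Hr.
    set (dw := fun i => werr thstar (x r) i - wt i).
    assert (Hdw : dot n dw dw <= T * c * D).
    { unfold dot, dw, wt.
      rewrite (vsum_ext n _ (fun i => RInt (vartheta_rate_at i) t r
                                     * RInt (vartheta_rate_at i) t r))
        by (intros i Hi; rewrite werr_increment; auto; lra).
      apply vsum_RInt_sqr_le; auto; [lra| |apply ex_RInt_dissipation; lra|].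
      - intros i Hi. split; [apply ex_RInt_vartheta_rate; auto; lra|].
        apply (ex_RInt_along_solution (fun P X => vartheta_rate n gamma thstar P X i
                                                  * vartheta_rate n gamma thstar P X i)); [|lra].
        apply preserves_continuity_mult; apply vartheta_rate_preserves_continuity; auto.
      - intros r' Hr'. apply vartheta_rate_sqr_le; auto. apply hK; lra. }
    assert (Hsplit : dot n (phi r) wt = dot n (phi r) (werr thstar (x r)) - dot n (phi r) dw)
      by (unfold dw; rewrite dot_minus_r; ring).
    set (a := dot n (phi r) (werr thstar (x r))) in *. set (b := dot n (phi r) dw) in *.
    assert (Hb : b * b <= K * dot n dw dw).
    { eapply Rle_trans; [apply dot_Cauchy_Schwarz|].
      apply Rmult_le_compat_r; [apply dot_nonneg | apply hK; lra]. }
    assert (Ha : gamma * (a * a) <= dissip r)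
      by apply (gamma_werr_le_dissipation n beta gamma thstar hbeta).
    assert (Ha2 : a * a <= dissip r / gamma).
    { apply Rmult_le_reg_l with gamma; auto. field_simplify; lra. }
    assert (K * dot n dw dw <= K * (T * c * D)) by (apply Rmult_le_compat_l; auto; apply K_nonneg).
    rewrite Hsplit. assert (0 <= (a + b) * (a + b)) by apply Rle_0_sqr.
    replace (2 / gamma * dissip r) with (2 * (dissip r / gamma)) by (field; lra). nra. }
  assert (Hex : ex_RInt (fun r => dot n (phi r) wt * dot n (phi r) wt) t (t + T)).
  { apply (ex_RInt_along_solution (fun P _ => dot n P wt * dot n P wt)); [|lra].
    intros P X s HP' HX HY. unfold dot. continuity_R HP' HX HY. }
  assert (HI := RInt_le_affine _ dissip (2 / gamma) (2 * K * T * c * D) t (t + T)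
                  ltac:(lra) Hex ltac:(apply ex_RInt_dissipation; lra) Hpt).
  fold D in HI. replace (t + T - t) with T in HI by ring. lra.
Qed.

Lemma lyap_window_bound t : t0 <= t ->
  lyap n thstar (x t) <= window_gain beta gamma mu K T delta * RInt dissip t (t + T).
Proof.
  intros Ht. assert (Hw := werr_window_bound t Ht). assert (Hz := zerr_window_bound t Ht).
  unfold lyap, window_gain. set (D := RInt dissip t (t + T)) in *.
  set (W := dot n (werr thstar (x t)) (werr thstar (x t))) in *.
  set (Z := dot n (zerr (x t)) (zerr (x t))) in *.
  set (A := 2 / gamma + 2 * K * T * T * vartheta_rate_gain beta gamma K) in *.
  set (B := 2 / beta + 2 * T * T * zerr_rate_gain beta gamma mu K) in *.
  assert (W <= A / delta * D) by (apply Rmult_le_reg_l with delta; auto; field_simplify; lra).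
  assert (Z <= B / T * D) by (apply Rmult_le_reg_l with T; auto; field_simplify; lra).
  lra.
Qed.

Lemma lyap_window_contraction t : t0 <= t ->
  lyap n thstar (x (t + T)) <= contraction_rate beta gamma mu K T delta * lyap n thstar (x t).
Proof.
  intros Ht. assert (Hb := lyap_window_bound t Ht).
  assert (Hd := lyap_dissipation t (t + T) ltac:(lra)).
  assert (HD := RInt_dissipation_nonneg t (t + T) ltac:(lra)).
  assert (Hg : 0 <= window_gain beta gamma mu K T delta)
    by (apply window_gain_nonneg; auto; apply K_nonneg).
  unfold contraction_rate. set (C := window_gain beta gamma mu K T delta + 1) in *.
  set (D := RInt dissip t (t + T)) in *. set (V := lyap n thstar (x t)) in *.
  assert (V / C <= D).
  { apply Rmult_le_reg_l with C; [unfold C; lra|].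
    field_simplify; [unfold C in *; lra | unfold C; lra]. }
  replace ((1 - 1 / C) * V) with (V - V / C) by (field; unfold C; lra). lra.
Qed.

Lemma lyap_geometric_decay k t : t0 + INR k * T <= t ->
  lyap n thstar (x t) <= contraction_rate beta gamma mu K T delta ^ k * lyap n thstar (x t0).
Proof.
  intros Ht.
  assert (Hrate : 0 <= contraction_rate beta gamma mu K T delta < 1)
    by (apply contraction_rate_bounds; auto; apply K_nonneg).
  set (rho := contraction_rate beta gamma mu K T delta) in *.
  assert (Hk0 : 0 <= INR k) by apply pos_INR.
  apply Rle_trans with (lyap n thstar (x (t0 + INR k * T))); [apply lyap_nonincreasing; nra|].
  clear Ht. induction k as [|k IH].
  - simpl. replace (t0 + 0 * T) with t0 by ring. lra.
  - assert (Hk : 0 <= INR k) by apply pos_INR.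
    replace (t0 + INR (S k) * T) with ((t0 + INR k * T) + T) by (rewrite S_INR; ring).
    eapply Rle_trans; [apply lyap_window_contraction; nra|].
    simpl. rewrite Rmult_assoc. apply Rmult_le_compat_l; [lra | apply IH; auto].
Qed.

Lemma err_sq_geometric_decay k t : t0 + INR k * T <= t ->
  err_sq n thstar (x t)
  <= 9 * contraction_rate beta gamma mu K T delta ^ k * err_sq n thstar (x t0).
Proof.
  intros Ht. assert (Hdecay := lyap_geometric_decay k t Ht).
  assert (Hrate : 0 <= contraction_rate beta gamma mu K T delta < 1)
    by (apply contraction_rate_bounds; auto; apply K_nonneg).
  set (rho := contraction_rate beta gamma mu K T delta) in *.
  assert (H1 := err_sq_le_lyap n thstar (x t)). assert (H2 := lyap_le_err_sq n thstar (x t0)).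
  assert (0 <= rho ^ k) by (apply pow_le; lra).
  assert (rho ^ k * lyap n thstar (x t0) <= rho ^ k * (3 * err_sq n thstar (x t0)))
    by (apply Rmult_le_compat_l; lra).
  lra.
Qed.

End Solution.

Lemma UGAS_of_exponential_bound {X : Type} (sol : R -> (R -> X) -> Prop) (err : X -> R) c rho T :
  0 < c -> 0 <= rho < 1 -> 0 < T ->
  (forall t0 x, 0 <= t0 -> sol t0 x ->
     forall k t, t0 + INR k * T <= t -> err (x t) <= c * rho ^ k * err (x t0)) ->
  UGAS sol err.
Proof.
  intros Hc Hrho HT Hb. split; [|split].
  - intros eps Heps. exists (eps / c). split; [apply Rdiv_lt_0_compat; lra|].
    intros t0 x Ht0 Hs H0 t Ht.
    assert (H := Hb t0 x Ht0 Hs O t ltac:(simpl; lra)). simpl in H.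
    apply Rmult_lt_compat_l with (r := c) in H0; auto.
    replace (c * (eps / c)) with eps in H0 by (field; lra). lra.
  - intros r Hr. exists (c * r). split; [nra|].
    intros t0 x Ht0 Hs H0 t Ht.
    assert (H := Hb t0 x Ht0 Hs O t ltac:(simpl; lra)). simpl in H. nra.
  - intros r eps Hr Heps.
    assert (Hy : 0 < eps / (c * r)) by (apply Rdiv_lt_0_compat; nra).
    destruct (pow_lt_1_zero rho ltac:(rewrite Rabs_right; lra) _ Hy) as [N HN].
    assert (HN1 := HN (S N) ltac:(lia)). rewrite Rabs_right in HN1 by (apply Rle_ge, pow_le; lra).
    assert (HcN : c * rho ^ S N * r < eps).
    { apply Rmult_lt_compat_r with (r := c * r) in HN1; [|nra].
      replace (eps / (c * r) * (c * r)) with eps in HN1 by (field; lra). lra. }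
    exists (INR (S N) * T). split; [apply Rmult_lt_0_compat; [apply lt_0_INR; lia | lra]|].
    intros t0 x Ht0 Hs H0 t Ht.
    assert (H := Hb t0 x Ht0 Hs (S N) t ltac:(lra)).
    assert (0 <= c * rho ^ S N) by (apply Rmult_le_pos; [lra | apply pow_le; lra]).
    assert (c * rho ^ S N * err (x t0) <= c * rho ^ S N * r) by (apply Rmult_le_compat_l; lra).
    lra.
Qed.

Lemma sqrt_pow x k : 0 <= x -> sqrt (x ^ k) = sqrt x ^ k.
Proof.
  intros Hx. induction k as [|k IH]; simpl; [apply sqrt_1|].
  rewrite sqrt_mult by (auto; apply pow_le; auto). rewrite IH; reflexivity.
Qed.

Lemma sqrt_le_geometric a b rho k : 0 <= b -> 0 <= rho -> a <= 9 * rho ^ k * b ->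
  sqrt a <= 3 * sqrt rho ^ k * sqrt b.
Proof.
  intros Hb Hrho Hab.
  assert (H9 : sqrt 9 = 3) by (replace 9 with (3 * 3) by ring; apply sqrt_square; lra).
  assert (0 <= rho ^ k) by (apply pow_le; auto).
  rewrite <- H9, <- sqrt_pow, <- !sqrt_mult; try lra; try (apply Rmult_le_pos; lra).
  apply sqrt_le_1_alt. lra.
Qed.

Theorem theorem1 (n : nat) (hn : (1 <= n)%nat) (thstar : nat -> R)
  (phi : R -> nat -> R)
  (hpc : piecewise_continuous n phi) (hpe : persistently_exciting n phi)
  (beta gamma mu : R) (hbeta : 0 < beta) (hgamma : 0 < gamma) (hmu : 0 < mu)
  (hbg : beta >= 2 * gamma / mu) :
  UGAS (is_solution n beta gamma mu phi thstar) (err_eq n thstar).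
Proof.
  assert (hbg' : 2 * gamma <= beta * mu).
  { apply Rge_le, (Rmult_le_compat_r mu) in hbg; [|lra].
    replace (2 * gamma / mu * mu) with (2 * gamma) in hbg by (field; lra). lra. }
  destruct hpe as [M [T [delta [hM [hT [hd [hbound hPE]]]]]]].
  assert (hK : forall t, 0 <= t -> dot n (phi t) (phi t) <= M * M)
    by (intros t Ht; apply dot_le_of_vnorm_le; auto).
  set (rho := contraction_rate beta gamma mu (M * M) T delta).
  assert (Hrho : 0 <= rho < 1) by (apply contraction_rate_bounds; auto; nra).
  apply (UGAS_of_exponential_bound _ _ 3 (sqrt rho) T); auto; [lra| |].
  { split; [apply sqrt_pos|]. rewrite <- sqrt_1. apply sqrt_lt_1_alt; lra. }
  intros t0 x Ht0 Hsol k t Ht. rewrite !err_eq_sqrt.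
  apply sqrt_le_geometric; [apply err_sq_nonneg | lra|].
  exact (err_sq_geometric_decay n beta gamma mu phi thstar t0 x hbeta hgamma hmu hbg'
           Ht0 Hsol hpc (M * M) T delta hK hT hd hPE k t Ht).
Qed.
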